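(* Let $C_\alpha>0$ and consider one of the following three setups for learning rates $\{\alpha_t\}_{t\ge0}$ and interval lengths $\{T_m\}_{m\ge0}$: (a) $\alpha_t=\frac{C_\alpha}{t+3}$ and $T_m=\frac{C_\alpha\ln^{\nu_1}(m+3)}{m+3}$ with $\nu_1\in(0,1)$; (b) $\alpha_t=\frac{C_\alpha}{(t+3)^\nu}$ with $\nu\in(\frac23,1)$ and $T_m=\frac{C_\alpha}{(m+3)^{\nu_2}}$ with $\frac12<\nu_2<\frac{\nu}{2-\nu}$; (c) $\alpha_t=\frac{C_\alpha}{(t+3)\ln^\nu(t+3)}$ with $\nu\in(0,1)$ and $T_m=\frac{C_\alpha}{m+3}$. Define $t_0=0$ and $t_{m+1}=\min\{k:\sum_{t=t_m}^{k-1}\alpha_t\ge T_m\}$ for $m\ge0$. Then there exist a constant $C$ and an integer $m_0$ such that for all $m\ge m_0$ and all $t\ge t_m$, $\alpha_t\le C\,T_m^2$. *)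

From Stdlib Require Export Reals Lra Lia.
Open Scope R_scope.

Fixpoint sum_range (f : nat -> R) (a n : nat) : R :=
  match n with
  | O => 0
  | S n' => sum_range f a n' + f (a + n')%nat
  end.

(* \sum_{t=a}^{k-1} f t  (empty, = 0, when k <= a). *)
Definition sum_from_to (f : nat -> R) (a k : nat) : R := sum_range f a (k - a).

Definition is_switch_seq (alpha T : nat -> R) (tm : nat -> nat) : Prop :=
  tm O = O /\
  forall m : nat,
    sum_from_to alpha (tm m) (tm (S m)) >= T m /\
    (forall k : nat, sum_from_to alpha (tm m) k >= T m -> (tm (S m) <= k)%nat).

Definition setup_a (Ca : R) (alpha T : nat -> R) : Prop :=
  exists nu1 : R, 0 < nu1 < 1 /\
    (forall t : nat, alpha t = Ca / (INR t + 3)) /\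
    (forall m : nat, T m = Ca * Rpower (ln (INR m + 3)) nu1 / (INR m + 3)).

Definition setup_b (Ca : R) (alpha T : nat -> R) : Prop :=
  exists nu nu2 : R, 2/3 < nu < 1 /\ 1/2 < nu2 < nu / (2 - nu) /\
    (forall t : nat, alpha t = Ca / Rpower (INR t + 3) nu) /\
    (forall m : nat, T m = Ca / Rpower (INR m + 3) nu2).

Definition setup_c (Ca : R) (alpha T : nat -> R) : Prop :=
  exists nu : R, 0 < nu < 1 /\
    (forall t : nat, alpha t = Ca / ((INR t + 3) * Rpower (ln (INR t + 3)) nu)) /\
    (forall m : nat, T m = Ca / (INR m + 3)).

From Stdlib Require Import Reals Lra Lia.
Open Scope R_scope.

(* Since alpha is nonincreasing and each window [t_m, t_{m+1}) carries at least
   T_m of step size, sum_{t < t_m} alpha_t >= sum_{k < m} T_k, so it suffices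
   to bound alpha_n by C T_m^2 whenever the alpha-sum up to n has caught up with
   the T-sum up to m.  Both partial sums are compared with integrals.  In setups
   (a) and (c) they grow logarithmically, and since ln^nu (t + 3) eventually exceeds 2
   the T-sum grows at least twice as fast as the alpha-sum; catching up then forces
   (m + 3)^2 <= C (n + 2).  In setup (b) catching up gives
   (m + 3)^(1 - nu2) <= C (n + 3)^(1 - nu), and nu2 < nu / (2 - nu) says exactly
   that 2 nu2 (1 - nu) < nu (1 - nu2), whence (n + 3)^(-nu) <= C (m + 3)^(-2 nu2). *)

Lemma exp_le_mono x y : x <= y -> exp x <= exp y.
Proof. intros [Hlt | ->]; [apply Rlt_le, exp_increasing, Hlt | apply Rle_refl]. Qed.

Lemma ln_le_mono x y : 0 < x -> x <= y -> ln x <= ln y.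
Proof. intros Hx [Hlt | ->]; [apply Rlt_le, ln_increasing; assumption | apply Rle_refl]. Qed.

Lemma ln_pos x : 1 < x -> 0 < ln x.
Proof. intros Hx. rewrite <- ln_1. apply ln_increasing; lra. Qed.

Lemma ln_le_sub_1 z : 0 < z -> ln z <= z - 1.
Proof. intros Hz. pose proof (exp_ineq1_le (ln z)) as H. rewrite exp_ln in H; lra. Qed.

Lemma ln_succ_sub_le y : 0 < y -> ln (y + 1) - ln y <= / y.
Proof.
  intros Hy.
  assert (Hpos : 0 < (y + 1) * / y) by (apply Rmult_lt_0_compat; [lra | apply Rinv_0_lt_compat, Hy]).
  pose proof (ln_le_sub_1 _ Hpos) as H.
  rewrite ln_mult, ln_Rinv in H by (try apply Rinv_0_lt_compat; lra).
  replace ((y + 1) * / y - 1) with (/ y) in H by (field; lra). lra.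
Qed.

Lemma ln_succ_sub_ge y : 0 < y -> / (y + 1) <= ln (y + 1) - ln y.
Proof.
  intros Hy.
  assert (Hpos : 0 < y * / (y + 1)) by (apply Rmult_lt_0_compat; [lra | apply Rinv_0_lt_compat; lra]).
  pose proof (ln_le_sub_1 _ Hpos) as H.
  rewrite ln_mult, ln_Rinv in H by (try apply Rinv_0_lt_compat; lra).
  replace (y * / (y + 1) - 1) with (- / (y + 1)) in H by (field; lra). lra.
Qed.

Lemma Rpower_pos x a : 0 < Rpower x a.
Proof. apply exp_pos. Qed.

Lemma Rpower_succ_sub_bounds p x : 0 <= p <= 1 -> 0 < x ->
  p * Rpower (x + 1) (p - 1) <= Rpower (x + 1) p - Rpower x p <= p * Rpower x (p - 1).
Proof.
  intros Hp Hx.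
  destruct (MVT_cor2 (fun y => Rpower y p) (fun c => p * Rpower c (p - 1)) x (x + 1))
    as (c & Hmvt & Hc); [lra | intros c Hc; apply derivable_pt_lim_power; lra |].
  rewrite Hmvt. replace (x + 1 - x) with 1 by ring. rewrite Rmult_1_r.
  assert (ln x <= ln c) by (apply ln_le_mono; lra).
  assert (ln c <= ln (x + 1)) by (apply ln_le_mono; lra).
  unfold Rpower. split; apply Rmult_le_compat_l, exp_le_mono; nra.
Qed.

Lemma Rdiv_le_contravar c x y : 0 <= c -> 0 < x -> x <= y -> c / y <= c / x.
Proof. intros Hc Hx Hxy. apply Rmult_le_compat_l, Rinv_le_contravar; assumption. Qed.

Lemma div_Rpower c x a : c / Rpower x a = c * exp (- (a * ln x)).
Proof. unfold Rpower, Rdiv. rewrite exp_Ropp. reflexivity. Qed.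

Lemma Rinv_le_exp_div_sq x y K : 0 < x -> 0 < y ->
  2 * ln y <= ln x + K -> / x <= exp K / y ^ 2.
Proof.
  intros Hx Hy Hln. pose proof (exp_pos K) as HK. pose proof (pow_lt y 2 Hy) as Hy2.
  assert (Hsq : y ^ 2 <= exp K * x).
  { rewrite <- (exp_ln (y ^ 2)), ln_pow by assumption.
    rewrite <- (exp_ln x) by exact Hx. rewrite <- exp_plus.
    apply exp_le_mono. simpl INR. lra. }
  replace (exp K / y ^ 2) with (/ (y ^ 2 / exp K)) by (field; lra).
  apply Rinv_le_contravar; [apply Rdiv_lt_0_compat; lra|].
  apply Rmult_le_reg_r with (exp K); [exact HK|].
  unfold Rdiv. rewrite Rmult_assoc, Rinv_l by lra. lra.
Qed.

Lemma INR_add_pos n c : 0 < c -> 0 < INR n + c.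
Proof. pose proof (pos_INR n). lra. Qed.

Lemma cv_infty_INR_add c : cv_infty (fun j => INR j + c).
Proof.
  intros M. destruct (INR_archimed 1 (M - c)) as [N HN]; [lra|].
  exists N. intros n Hn. apply le_INR in Hn. lra.
Qed.

Lemma cv_infty_ln u : cv_infty u -> cv_infty (fun j => ln (u j)).
Proof.
  intros Hu M. destruct (Hu (exp M)) as [N HN]. exists N. intros n Hn.
  rewrite <- (ln_exp M) at 1. apply ln_increasing; [apply exp_pos | apply HN, Hn].
Qed.

Lemma cv_infty_Rpower u q : 0 < q -> cv_infty u -> cv_infty (fun j => Rpower (u j) q).
Proof.
  intros Hq Hu M. destruct (Rle_or_lt M 0) as [HM|HM].
  { exists 0%nat. intros n _. pose proof (Rpower_pos (u n) q). lra. }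
  destruct (Hu (exp (ln M / q))) as [N HN]. exists N. intros n Hn.
  specialize (HN n Hn). apply ln_increasing in HN; [|apply exp_pos]. rewrite ln_exp in HN.
  rewrite <- (exp_ln M) by exact HM. apply exp_increasing.
  apply Rmult_lt_compat_l with (r := q) in HN; [|exact Hq].
  replace (q * (ln M / q)) with (ln M) in HN by (field; lra). exact HN.
Qed.

Lemma sum_range_add f a n k :
  sum_range f a (n + k) = sum_range f a n + sum_range f (a + n) k.
Proof.
  induction k as [|k IH]; simpl.
  - rewrite Nat.add_0_r. ring.
  - rewrite Nat.add_succ_r. simpl. rewrite IH, Nat.add_assoc. ring.
Qed.

Lemma sum_range_split f J n : (J <= n)%nat ->
  sum_range f 0 n = sum_range f 0 J + sum_range f J (n - J).
Proof.
  intros HJn. rewrite <- sum_range_add. f_equal. lia.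
Qed.

Lemma sum_range_le f g a n : (forall i, (a <= i)%nat -> f i <= g i) ->
  sum_range f a n <= sum_range g a n.
Proof.
  intros Hfg. induction n as [|n IH]; simpl; [lra|].
  pose proof (Hfg (a + n)%nat ltac:(lia)). lra.
Qed.

Lemma sum_range_ext f g a n : (forall i, (a <= i)%nat -> f i = g i) ->
  sum_range f a n = sum_range g a n.
Proof.
  intros Hfg. apply Rle_antisym; apply sum_range_le; intros i Hi; rewrite Hfg by exact Hi; lra.
Qed.

Lemma sum_range_le_telescope f (F : nat -> R) a n :
  (forall i, (a <= i)%nat -> f i <= F (S i) - F i) ->
  sum_range f a n <= F (a + n)%nat - F a.
Proof.
  intros Hf. induction n as [|n IH]; simpl.
  - rewrite Nat.add_0_r. lra.
  - pose proof (Hf (a + n)%nat ltac:(lia)). rewrite Nat.add_succ_r. lra.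
Qed.

Lemma sum_range_ge_telescope f (F : nat -> R) a n :
  (forall i, (a <= i)%nat -> F (S i) - F i <= f i) ->
  F (a + n)%nat - F a <= sum_range f a n.
Proof.
  intros Hf. induction n as [|n IH]; simpl.
  - rewrite Nat.add_0_r. lra.
  - pose proof (Hf (a + n)%nat ltac:(lia)). rewrite Nat.add_succ_r. lra.
Qed.

Lemma sum_range_inv_le c a n : 0 <= c ->
  sum_range (fun i => c / (INR i + 3)) a n
  <= c * ln (INR (a + n) + 2) - c * ln (INR a + 2).
Proof.
  intros Hc. apply (sum_range_le_telescope _ (fun k => c * ln (INR k + 2))).
  intros i _. rewrite S_INR.
  pose proof (ln_succ_sub_ge (INR i + 2) (INR_add_pos i 2 ltac:(lra))).
  replace (INR i + 1 + 2) with (INR i + 2 + 1) by ring.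
  replace (INR i + 3) with (INR i + 2 + 1) by ring.
  unfold Rdiv. nra.
Qed.

Lemma sum_range_inv_ge c a n : 0 <= c ->
  c * ln (INR (a + n) + 3) - c * ln (INR a + 3)
  <= sum_range (fun i => c / (INR i + 3)) a n.
Proof.
  intros Hc. apply (sum_range_ge_telescope _ (fun k => c * ln (INR k + 3))).
  intros i _. rewrite S_INR.
  pose proof (ln_succ_sub_le (INR i + 3) (INR_add_pos i 3 ltac:(lra))).
  replace (INR i + 1 + 3) with (INR i + 3 + 1) by ring.
  unfold Rdiv. nra.
Qed.

Lemma sum_range_Rpower_le c p a n : 0 <= c -> 0 < p <= 1 ->
  sum_range (fun i => c * Rpower (INR i + 3) (p - 1)) a n
  <= c / p * Rpower (INR (a + n) + 2) p - c / p * Rpower (INR a + 2) p.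
Proof.
  intros Hc Hp. apply (sum_range_le_telescope _ (fun k => c / p * Rpower (INR k + 2) p)).
  intros i _. rewrite S_INR.
  destruct (Rpower_succ_sub_bounds p (INR i + 2) ltac:(lra) (INR_add_pos i 2 ltac:(lra)))
    as [Hlow _].
  replace (INR i + 1 + 2) with (INR i + 2 + 1) by ring.
  replace (INR i + 3) with (INR i + 2 + 1) by ring.
  replace (c / p * Rpower (INR i + 2 + 1) p - c / p * Rpower (INR i + 2) p)
    with (c / p * (Rpower (INR i + 2 + 1) p - Rpower (INR i + 2) p)) by ring.
  replace (c * Rpower (INR i + 2 + 1) (p - 1))
    with (c / p * (p * Rpower (INR i + 2 + 1) (p - 1))) by (field; lra).
  apply Rmult_le_compat_l; [apply Rmult_le_pos; [|apply Rlt_le, Rinv_0_lt_compat]; lra | exact Hlow].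
Qed.

Lemma sum_range_Rpower_ge c q a n : 0 <= c -> 0 < q <= 1 ->
  c / q * Rpower (INR (a + n) + 3) q - c / q * Rpower (INR a + 3) q
  <= sum_range (fun i => c * Rpower (INR i + 3) (q - 1)) a n.
Proof.
  intros Hc Hq. apply (sum_range_ge_telescope _ (fun k => c / q * Rpower (INR k + 3) q)).
  intros i _. rewrite S_INR.
  destruct (Rpower_succ_sub_bounds q (INR i + 3) ltac:(lra) (INR_add_pos i 3 ltac:(lra)))
    as [_ Hup].
  replace (INR i + 1 + 3) with (INR i + 3 + 1) by ring.
  replace (c / q * Rpower (INR i + 3 + 1) q - c / q * Rpower (INR i + 3) q)
    with (c / q * (Rpower (INR i + 3 + 1) q - Rpower (INR i + 3) q)) by ring.
  replace (c * Rpower (INR i + 3) (q - 1))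
    with (c / q * (q * Rpower (INR i + 3) (q - 1))) by (field; lra).
  apply Rmult_le_compat_l; [apply Rmult_le_pos; [|apply Rlt_le, Rinv_0_lt_compat]; lra | exact Hup].
Qed.

Definition catch_up_sq_bound (alpha T : nat -> R) : Prop :=
  exists (C : R) (m0 : nat), forall m n : nat, (m0 <= m)%nat -> (m <= n)%nat ->
    sum_range T 0 m <= sum_range alpha 0 n -> alpha n <= C * T m ^ 2.

Section SwitchingSequence.

Variables (alpha T : nat -> R) (tm : nat -> nat).
Hypothesis T_pos : forall m, 0 < T m.
Hypothesis switch : is_switch_seq alpha T tm.

Lemma switch_seq_lt m : (tm m < tm (S m))%nat.
Proof.
  destruct (proj2 switch m) as [Hreach _].
  destruct (Nat.lt_ge_cases (tm m) (tm (S m))) as [Hlt|Hge]; [exact Hlt|].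
  unfold sum_from_to in Hreach. replace (tm (S m) - tm m)%nat with 0%nat in Hreach by lia.
  simpl in Hreach. specialize (T_pos m). lra.
Qed.

Lemma switch_seq_ge_index m : (m <= tm m)%nat.
Proof. induction m as [|m IH]; [lia|]. pose proof (switch_seq_lt m). lia. Qed.

Lemma switch_seq_sum_le m : sum_range T 0 m <= sum_range alpha 0 (tm m).
Proof.
  induction m as [|m IH]; simpl.
  - rewrite (proj1 switch). simpl. lra.
  - destruct (proj2 switch m) as [Hreach _]. unfold sum_from_to in Hreach.
    rewrite (sum_range_split alpha (tm m) (tm (S m))) by (pose proof (switch_seq_lt m); lia).
    lra.
Qed.

Hypothesis alpha_decr : Un_decreasing alpha.

Lemma switch_seq_sq_bound : catch_up_sq_bound alpha T ->
  exists (C : R) (m0 : nat),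
    forall m : nat, (m0 <= m)%nat ->
      forall t : nat, (tm m <= t)%nat -> alpha t <= C * (T m) ^ 2.
Proof.
  intros (C & m0 & Hcatch). exists C, m0. intros m Hm t Ht.
  apply Rle_trans with (alpha (tm m)); [apply decreasing_prop; assumption|].
  apply Hcatch; auto using switch_seq_ge_index, switch_seq_sum_le.
Qed.

End SwitchingSequence.

Lemma catch_up_sq_bound_log alpha T (N : nat) (c1 c2 c3 K1 K2 : R) :
  0 <= c1 -> 0 < c2 -> 0 < c3 ->
  (forall n, (N <= n)%nat -> alpha n <= c1 / (INR n + 2)) ->
  (forall m, (N <= m)%nat -> c2 / (INR m + 3) <= T m) ->
  (forall n, (N <= n)%nat -> sum_range alpha 0 n <= c3 * ln (INR n + 2) + K1) ->
  (forall m, (N <= m)%nat -> 2 * c3 * ln (INR m + 3) - K2 <= sum_range T 0 m) ->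
  catch_up_sq_bound alpha T.
Proof.
  intros Hc1 Hc2 Hc3 Halpha HT Hsum_alpha Hsum_T.
  set (K := (K1 + K2) / c3).
  exists (c1 * exp K / c2 ^ 2), N. intros m n Hm Hmn Hsum.
  pose proof (INR_add_pos m 3 ltac:(lra)) as Hm3.
  pose proof (INR_add_pos n 2 ltac:(lra)) as Hn2.
  assert (Hln : 2 * ln (INR m + 3) <= ln (INR n + 2) + K).
  { pose proof (Hsum_alpha n ltac:(lia)). pose proof (Hsum_T m Hm).
    apply Rmult_le_reg_l with c3; [exact Hc3|].
    replace (c3 * (ln (INR n + 2) + K)) with (c3 * ln (INR n + 2) + (K1 + K2))
      by (unfold K; field; lra).
    lra. }
  assert (HTsq : (c2 / (INR m + 3)) ^ 2 <= T m ^ 2).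
  { apply pow_incr. split; [apply Rlt_le, Rdiv_lt_0_compat; lra | apply HT, Hm]. }
  pose proof (Rinv_le_exp_div_sq _ _ K Hn2 Hm3 Hln) as Hinv.
  apply Rle_trans with (c1 / (INR n + 2)); [apply Halpha; lia|].
  apply Rle_trans with (c1 * exp K / c2 ^ 2 * (c2 / (INR m + 3)) ^ 2).
  - replace (c1 * exp K / c2 ^ 2 * (c2 / (INR m + 3)) ^ 2)
      with (c1 * (exp K / (INR m + 3) ^ 2)) by (field; lra).
    apply Rmult_le_compat_l; assumption.
  - apply Rmult_le_compat_l; [|exact HTsq].
    apply Rmult_le_pos; [apply Rmult_le_pos; [|apply Rlt_le, exp_pos] |
                         apply Rlt_le, Rinv_0_lt_compat, pow_lt]; lra.
Qed.

Section SetupA.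

Variables (Ca nu1 : R) (alpha T : nat -> R).
Hypothesis Ca_pos : 0 < Ca.
Hypothesis nu1_pos : 0 < nu1.
Hypothesis alpha_def : forall t, alpha t = Ca / (INR t + 3).
Hypothesis T_def : forall m, T m = Ca * Rpower (ln (INR m + 3)) nu1 / (INR m + 3).

Lemma setup_a_T_pos m : 0 < T m.
Proof.
  rewrite T_def. pose proof (Rpower_pos (ln (INR m + 3)) nu1).
  apply Rdiv_lt_0_compat; [apply Rmult_lt_0_compat|apply INR_add_pos]; lra.
Qed.

Lemma setup_a_alpha_decreasing : Un_decreasing alpha.
Proof.
  intros t. rewrite !alpha_def, S_INR.
  apply Rdiv_le_contravar; [lra | apply INR_add_pos | ]; lra.
Qed.

Lemma setup_a_catch_up : catch_up_sq_bound alpha T.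
Proof.
  destruct (cv_infty_Rpower _ nu1 nu1_pos (cv_infty_ln _ (cv_infty_INR_add 3)) 2) as [J HJ].
  assert (T_ge : forall m, (J <= m)%nat -> 2 * Ca / (INR m + 3) <= T m).
  { intros m Hm. rewrite T_def. specialize (HJ m Hm).
    unfold Rdiv. apply Rmult_le_compat_r; [apply Rlt_le, Rinv_0_lt_compat, INR_add_pos|]; nra. }
  apply (catch_up_sq_bound_log alpha T J Ca (2 * Ca) Ca (- (Ca * ln 2))
           (2 * Ca * ln (INR J + 3) - sum_range T 0 J)); try lra.
  - intros n _. rewrite alpha_def.
    apply Rdiv_le_contravar; [lra | apply INR_add_pos | ]; lra.
  - exact T_ge.
  - intros n _.
    rewrite (sum_range_ext alpha (fun i => Ca / (INR i + 3))) by (intros; apply alpha_def).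
    pose proof (sum_range_inv_le Ca 0 n ltac:(lra)) as H.
    rewrite Nat.add_0_l in H. replace (INR 0 + 2) with 2 in H by (simpl; ring). lra.
  - intros m Hm. rewrite (sum_range_split T J m Hm).
    pose proof (sum_range_inv_ge (2 * Ca) J (m - J) ltac:(lra)) as H.
    replace (J + (m - J))%nat with m in H by lia.
    pose proof (sum_range_le (fun i => 2 * Ca / (INR i + 3)) T J (m - J) T_ge). lra.
Qed.

Lemma setup_a_schedule :
  (forall m, 0 < T m) /\ Un_decreasing alpha /\ catch_up_sq_bound alpha T.
Proof. auto using setup_a_T_pos, setup_a_alpha_decreasing, setup_a_catch_up. Qed.

End SetupA.

Section SetupB.

Variables (Ca nu nu2 : R) (alpha T : nat -> R).
Hypothesis Ca_pos : 0 < Ca.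
Hypothesis nu_range : 0 < nu < 1.
Hypothesis nu2_range : 0 < nu2 < nu / (2 - nu).
Hypothesis alpha_def : forall t, alpha t = Ca / Rpower (INR t + 3) nu.
Hypothesis T_def : forall m, T m = Ca / Rpower (INR m + 3) nu2.

Let p := 1 - nu.
Let q := 1 - nu2.

Lemma setup_b_exponent_gap : 2 * nu2 * p <= nu * q.
Proof.
  assert (nu2 * (2 - nu) < nu).
  { destruct nu2_range as [_ H]. apply Rmult_lt_compat_r with (r := 2 - nu) in H; [|lra].
    replace (nu / (2 - nu) * (2 - nu)) with nu in H by (field; lra). exact H. }
  unfold p, q. nra.
Qed.

Lemma setup_b_q_range : 0 < q < 1.
Proof.
  assert (nu / (2 - nu) < 1).
  { apply Rmult_lt_reg_r with (2 - nu); [lra|].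
    replace (nu / (2 - nu) * (2 - nu)) with nu by (field; lra). lra. }
  unfold q. lra.
Qed.

Lemma setup_b_T_pos m : 0 < T m.
Proof. rewrite T_def. apply Rdiv_lt_0_compat; [exact Ca_pos | apply Rpower_pos]. Qed.

Lemma setup_b_alpha_decreasing : Un_decreasing alpha.
Proof.
  intros t. rewrite !alpha_def, S_INR.
  pose proof (INR_add_pos t 3 ltac:(lra)).
  apply Rdiv_le_contravar; [lra | apply Rpower_pos |].
  apply Rle_Rpower_l; lra.
Qed.

Lemma setup_b_sum_alpha_le n : sum_range alpha 0 n <= Ca / p * Rpower (INR n + 3) p.
Proof.
  rewrite (sum_range_ext alpha (fun i => Ca * Rpower (INR i + 3) (p - 1))).
  2: { intros i _. rewrite alpha_def. replace (p - 1) with (- nu) by (unfold p; ring).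
       rewrite Rpower_Ropp. reflexivity. }
  pose proof (sum_range_Rpower_le Ca p 0 n ltac:(lra) ltac:(unfold p; lra)) as H.
  rewrite Nat.add_0_l in H.
  assert (Rpower (INR n + 2) p <= Rpower (INR n + 3) p)
    by (apply Rle_Rpower_l; [unfold p|split; [apply INR_add_pos|]]; lra).
  assert (0 < Ca / p) by (apply Rdiv_lt_0_compat; unfold p; lra).
  pose proof (Rpower_pos (INR 0 + 2) p). nra.
Qed.

Lemma setup_b_sum_T_ge : exists M : nat, forall m, (M <= m)%nat ->
  Ca / (2 * q) * Rpower (INR m + 3) q <= sum_range T 0 m.
Proof.
  pose proof setup_b_q_range as Hq.
  destruct (cv_infty_Rpower _ q (proj1 Hq) (cv_infty_INR_add 3) (2 * Rpower 3 q)) as [M HM].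
  exists M. intros m Hm. specialize (HM m Hm).
  rewrite (sum_range_ext T (fun i => Ca * Rpower (INR i + 3) (q - 1))).
  2: { intros i _. rewrite T_def. replace (q - 1) with (- nu2) by (unfold q; ring).
       rewrite Rpower_Ropp. reflexivity. }
  pose proof (sum_range_Rpower_ge Ca q 0 m ltac:(lra) ltac:(lra)) as H.
  rewrite Nat.add_0_l in H. replace (INR 0 + 3) with 3 in H by (simpl; ring).
  assert (0 < Ca / q) by (apply Rdiv_lt_0_compat; lra).
  replace (Ca / (2 * q)) with (Ca / q / 2) by (field; lra). nra.
Qed.

Lemma setup_b_log_catch_up m n :
  Ca / (2 * q) * Rpower (INR m + 3) q <= sum_range alpha 0 n ->
  ln (p / (2 * q)) + q * ln (INR m + 3) <= p * ln (INR n + 3).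
Proof.
  intros Hsum. pose proof setup_b_q_range as Hq.
  assert (Hcmp : p / (2 * q) * Rpower (INR m + 3) q <= Rpower (INR n + 3) p).
  { pose proof (setup_b_sum_alpha_le n).
    apply Rmult_le_reg_l with (Ca / p); [apply Rdiv_lt_0_compat; unfold p; lra|].
    replace (Ca / p * (p / (2 * q) * Rpower (INR m + 3) q))
      with (Ca / (2 * q) * Rpower (INR m + 3) q) by (unfold p; field; lra).
    lra. }
  apply ln_le_mono in Hcmp.
  2: { apply Rmult_lt_0_compat; [apply Rdiv_lt_0_compat; unfold p|apply Rpower_pos]; lra. }
  rewrite ln_mult, !ln_Rpower in Hcmp
    by (try apply Rdiv_lt_0_compat; try apply Rpower_pos; unfold p; lra).
  exact Hcmp.
Qed.

Lemma setup_b_catch_up : catch_up_sq_bound alpha T.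
Proof.
  destruct setup_b_sum_T_ge as [M HM].
  set (c0 := ln (p / (2 * q))).
  exists (exp (- (nu * c0 / p)) / Ca), M. intros m n Hm _ Hsum.
  set (Lm := ln (INR m + 3)). set (Ln := ln (INR n + 3)).
  assert (HLm : 0 <= Lm) by (apply Rlt_le, ln_pos; pose proof (pos_INR m); lra).
  pose proof (setup_b_log_catch_up m n (Rle_trans _ _ _ (HM m Hm) Hsum)) as Hgrowth.
  fold c0 Lm Ln in Hgrowth.
  assert (Hexp : nu * c0 / p + 2 * nu2 * Lm <= nu * Ln).
  { pose proof setup_b_exponent_gap.
    apply Rmult_le_reg_l with p; [unfold p; lra|].
    replace (p * (nu * c0 / p + 2 * nu2 * Lm)) with (nu * c0 + 2 * nu2 * p * Lm)
      by (unfold p; field; lra).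
    assert (p * nu * Ln >= nu * (c0 + q * Lm)) by nra.
    nra. }
  rewrite alpha_def, T_def, !div_Rpower. fold Lm Ln.
  replace (exp (- (nu * c0 / p)) / Ca * (Ca * exp (- (nu2 * Lm))) ^ 2)
    with (Ca * exp (- (nu * c0 / p + 2 * nu2 * Lm))).
  2: { replace (- (nu * c0 / p + 2 * nu2 * Lm))
         with (- (nu * c0 / p) + - (nu2 * Lm) + - (nu2 * Lm)) by ring.
       rewrite !exp_plus. field. lra. }
  apply Rmult_le_compat_l; [lra|]. apply exp_le_mono. lra.
Qed.

Lemma setup_b_schedule :
  (forall m, 0 < T m) /\ Un_decreasing alpha /\ catch_up_sq_bound alpha T.
Proof. auto using setup_b_T_pos, setup_b_alpha_decreasing, setup_b_catch_up. Qed.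

End SetupB.

Section SetupC.

Variables (Ca nu : R) (alpha T : nat -> R).
Hypothesis Ca_pos : 0 < Ca.
Hypothesis nu_pos : 0 < nu.
Hypothesis alpha_def : forall t, alpha t = Ca / ((INR t + 3) * Rpower (ln (INR t + 3)) nu).
Hypothesis T_def : forall m, T m = Ca / (INR m + 3).

Lemma setup_c_T_pos m : 0 < T m.
Proof. rewrite T_def. apply Rdiv_lt_0_compat; [|apply INR_add_pos]; lra. Qed.

Lemma setup_c_alpha_decreasing : Un_decreasing alpha.
Proof.
  intros t. rewrite !alpha_def, S_INR.
  pose proof (INR_add_pos t 3 ltac:(lra)).
  pose proof (ln_pos (INR t + 3) ltac:(pose proof (pos_INR t); lra)).
  pose proof (Rpower_pos (ln (INR t + 3)) nu).
  apply Rdiv_le_contravar; [lra | apply Rmult_lt_0_compat; lra |].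
  apply Rmult_le_compat; try lra.
  apply Rle_Rpower_l; [lra|]. split; [assumption | apply ln_le_mono; lra].
Qed.

Lemma setup_c_catch_up : catch_up_sq_bound alpha T.
Proof.
  destruct (cv_infty_Rpower _ nu nu_pos (cv_infty_ln _ (cv_infty_INR_add 3)) 2) as [J HJ].
  assert (alpha_le : forall n, (J <= n)%nat -> alpha n <= Ca / 2 / (INR n + 3)).
  { intros n Hn. rewrite alpha_def. specialize (HJ n Hn).
    pose proof (INR_add_pos n 3 ltac:(lra)).
    replace (Ca / 2 / (INR n + 3)) with (Ca / ((INR n + 3) * 2)) by (field; lra).
    apply Rdiv_le_contravar; [lra | apply Rmult_lt_0_compat; lra |].
    apply Rmult_le_compat_l; lra. }
  apply (catch_up_sq_bound_log alpha T J (Ca / 2) Ca (Ca / 2)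
           (sum_range alpha 0 J - Ca / 2 * ln (INR J + 2)) (Ca * ln 3)); try lra.
  - intros n Hn. apply Rle_trans with (Ca / 2 / (INR n + 3)); [apply alpha_le, Hn|].
    apply Rdiv_le_contravar; [lra | apply INR_add_pos | ]; lra.
  - intros m _. rewrite T_def. lra.
  - intros n Hn. rewrite (sum_range_split alpha J n Hn).
    pose proof (sum_range_inv_le (Ca / 2) J (n - J) ltac:(lra)) as H.
    replace (J + (n - J))%nat with n in H by lia.
    pose proof (sum_range_le alpha (fun i => Ca / 2 / (INR i + 3)) J (n - J) alpha_le). lra.
  - intros m _.
    rewrite (sum_range_ext T (fun i => Ca / (INR i + 3))) by (intros; apply T_def).
    pose proof (sum_range_inv_ge Ca 0 m ltac:(lra)) as H.
    rewrite Nat.add_0_l in H. replace (INR 0 + 3) with 3 in H by (simpl; ring). lra.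
Qed.

Lemma setup_c_schedule :
  (forall m, 0 < T m) /\ Un_decreasing alpha /\ catch_up_sq_bound alpha T.
Proof. auto using setup_c_T_pos, setup_c_alpha_decreasing, setup_c_catch_up. Qed.

End SetupC.

Theorem lemma1 (Ca : R) (alpha T : nat -> R) (tm : nat -> nat) :
  0 < Ca ->
  (setup_a Ca alpha T \/ setup_b Ca alpha T \/ setup_c Ca alpha T) ->
  is_switch_seq alpha T tm ->
  exists (C : R) (m0 : nat),
    forall m : nat, (m0 <= m)%nat ->
      forall t : nat, (tm m <= t)%nat -> alpha t <= C * (T m) ^ 2.
Proof.
  intros HCa Hsetup Hsw.
  assert (Hschedule : (forall m, 0 < T m) /\ Un_decreasing alpha /\ catch_up_sq_bound alpha T).
  { destruct Hsetup as [(nu1 & Hnu1 & Ha & HT) |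
                        [(nu & nu2 & Hnu & Hnu2 & Ha & HT) | (nu & Hnu & Ha & HT)]].
    - exact (setup_a_schedule Ca nu1 alpha T HCa (proj1 Hnu1) Ha HT).
    - exact (setup_b_schedule Ca nu nu2 alpha T HCa ltac:(lra) ltac:(lra) Ha HT).
    - exact (setup_c_schedule Ca nu alpha T HCa (proj1 Hnu) Ha HT). }
  destruct Hschedule as (T_pos & alpha_decr & Hcatch).
  exact (switch_seq_sq_bound alpha T tm T_pos Hsw alpha_decr Hcatch).
Qed.
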